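(* Take maps of event structures $f: A\to C$ and $g: B \to C$, and take their pullback $A\circledast B$. Suppose moreover that in the pullback, we have $[(a, b)]_x \rightarrow [(a', b')]_x$. Then necessarily, $a\rightarrow a'$ in $A$ or $b\rightarrow b'$ in $B$.
   Context: For events $e,e'$ of an event structure, $e \rightarrow e'$ denotes immediate causal dependency: $e<e'$ and no event lies strictly between them. The pullback $A\circledast B$ of $f:A\to C$ and $g:B\to C$ in the category of event structures and (total) maps is constructed as follows: in the product stable family $\mathcal{C}(A)\times\mathcal{C}(B)$, restrict to the set $R$ of pairs $(a,b)$ with $f a = g b$, and take the event structure of primes of the resulting stable family. Its events are primes $[(a,b)]_x$, where $x$ is a configuration of the restricted stable family containing $(a,b)$ and $[(a,b)]_x=\{e\in x\mid e\le_x (a,b)\}$ with $e\le_x e'$ iff every sub-configuration of $x$ containing $e'$ contains $e$; causality is inclusion and a finite set of primes is consistent iff its union is a configuration. *)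

From Stdlib Require Import List.
Set Implicit Arguments.

Definition subset {E : Type} (X Y : E -> Prop) : Prop := forall e, X e -> Y e.
Definition set_eq {E : Type} (X Y : E -> Prop) : Prop := forall e, X e <-> Y e.
Definition strict_subset {E : Type} (X Y : E -> Prop) : Prop :=
  subset X Y /\ ~ subset Y X.
Definition finite_set {E : Type} (X : E -> Prop) : Prop :=
  exists l : list E, forall e, X e <-> In e l.
Definition image {E F : Type} (f : E -> F) (X : E -> Prop) : F -> Prop :=
  fun c => exists e, X e /\ f e = c.

Record event_structure := {
  ev : Type;
  leq : ev -> ev -> Prop;
  con : (ev -> Prop) -> Prop;
  leq_refl : forall e, leq e e;
  leq_trans : forall e1 e2 e3, leq e1 e2 -> leq e2 e3 -> leq e1 e3;
  leq_antisym : forall e1 e2, leq e1 e2 -> leq e2 e1 -> e1 = e2;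
  down_finite : forall e, finite_set (fun e' => leq e' e);
  con_finite : forall X, con X -> finite_set X;
  con_single : forall e, con (fun e' => e' = e);
  con_sub : forall X Y, subset Y X -> con X -> con Y;
  con_down : forall X e e', con X -> X e' -> leq e e' ->
             con (fun d => X d \/ d = e)
}.

Definition lt_ev (A : event_structure) (a a' : ev A) : Prop :=
  leq A a a' /\ a <> a'.

Definition imm (A : event_structure) (a a' : ev A) : Prop :=
  lt_ev A a a' /\ ~ (exists c, lt_ev A a c /\ lt_ev A c a').

Definition config (A : event_structure) (x : ev A -> Prop) : Prop :=
  finite_set x /\ con A x /\
  (forall e e', x e' -> leq A e e' -> x e).

Record es_map (A C : event_structure) := {
  mfun :> ev A -> ev C;
  mfun_config : forall x, config A x -> config C (image mfun x);
  mfun_inj : forall x, config A x ->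
             forall a a', x a -> x a' -> mfun a = mfun a' -> a = a'
}.

Section Pullback.
Variables (A B C : event_structure) (f : es_map A C) (g : es_map B C).

Definition pi1 (x : ev A * ev B -> Prop) : ev A -> Prop := image fst x.
Definition pi2 (x : ev A * ev B -> Prop) : ev B -> Prop := image snd x.

(** Configurations of the product stable family C(A) x C(B) restricted to
    R = {(a,b) | f a = g b}.  (Events of the product involving the undefined
    component * are excluded by R, so we work with genuine pairs.) *)
Definition pb_config (x : ev A * ev B -> Prop) : Prop :=
  finite_set x /\
  (forall p, x p -> f (fst p) = g (snd p)) /\
  config A (pi1 x) /\ config B (pi2 x) /\
  (forall p p', x p -> x p' -> (fst p = fst p' \/ snd p = snd p') -> p = p') /\
  (forall p p', x p -> x p' -> p <> p' ->
     exists y, subset y x /\ config A (pi1 y) /\ config B (pi2 y) /\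
               (y p <-> ~ y p')).

(** The prime [e]_x = {e' in x | e' <=_x e}, where e' <=_x e iff every
    sub-configuration of x containing e contains e'. *)
Definition prime (x : ev A * ev B -> Prop) (e : ev A * ev B) : ev A * ev B -> Prop :=
  fun e' => x e' /\
    (forall y, pb_config y -> subset y x -> y e -> y e').

(** Events of the pullback A circledast B: the primes [e]_x. *)
Definition pb_event (P : ev A * ev B -> Prop) : Prop :=
  exists x e, pb_config x /\ x e /\ set_eq P (prime x e).

(** Immediate causality in the pullback (causality is inclusion of primes). *)
Definition pb_imm (P P' : ev A * ev B -> Prop) : Prop :=
  strict_subset P P' /\
  ~ (exists Q, pb_event Q /\ strict_subset P Q /\ strict_subset Q P').

End Pullback.

(* In a configuration x of the pullback, the order <=_x is generated by the
   orders of the two components: e' together with all events <=_x-below some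
   q <> e' lying below e' in A or in B form a sub-configuration of x, so if
   e <=_x e' with e <> e' then e <=_x q for such a q.  When [e]_x -> [e']_x,
   that q must be e itself, so e and e' are comparable in a component; and an
   event strictly between them there lifts (configurations are down-closed)
   to an event of x strictly between e and e' for <=_x, which immediacy
   forbids. *)

From Stdlib Require Import List Classical.
Set Implicit Arguments.
Unset Strict Implicit.

Lemma finite_subset (E : Type) (X Y : E -> Prop) :
  finite_set X -> subset Y X -> finite_set Y.
Proof.
  intros [l Hl] HYX.
  assert (HY : forall e, Y e -> In e l) by (intros e He; apply Hl, HYX, He).
  clear Hl HYX; revert Y HY.
  induction l as [|h t IH]; intros Y HY.
  - exists nil; intro e; split; [exact (HY e) | intros []].
  - destruct (IH (fun e => Y e /\ e <> h)) as [l' Hl'].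
    { intros e [He Hne]; destruct (HY e He); [congruence | assumption]. }
    destruct (classic (Y h)) as [Yh | nYh].
    + exists (h :: l'); intro e; split.
      * intro He; destruct (classic (e = h)) as [-> | ne]; [left | right];
          [reflexivity | apply Hl'; auto].
      * intros [<- | Hin]; [exact Yh | apply Hl' in Hin; tauto].
    + exists l'; intro e; split.
      * intro He; apply Hl'; split; [exact He | intros ->; contradiction].
      * intro Hin; apply Hl' in Hin; tauto.
Qed.

Lemma subset_image (E F : Type) (h : E -> F) (X Y : E -> Prop) :
  subset Y X -> subset (image h Y) (image h X).
Proof. intros HYX c (e & He & <-); exists e; auto. Qed.

Definition inj_on (E F : Type) (h : E -> F) (X : E -> Prop) : Prop :=
  forall e e', X e -> X e' -> h e = h e' -> e = e'.

Section ConfigImage.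
Variables (X : event_structure) (E : Type) (h : E -> ev X).

Lemma config_image_lift (x : E -> Prop) (e : E) (c : ev X) :
  config X (image h x) -> x e -> leq X c (h e) -> exists r, x r /\ h r = c.
Proof. intros (_ & _ & Hdown) He Hc; apply (Hdown c (h e)); [exists e|]; auto. Qed.

Lemma config_image_down (x y : E -> Prop) (r e : E) :
  inj_on h x -> subset y x -> config X (image h y) ->
  x r -> y e -> leq X (h r) (h e) -> y r.
Proof.
  intros Hinj Hyx Hy Hr He Hle.
  destruct (config_image_lift Hy He Hle) as (q & Hq & Eq).
  rewrite <- (Hinj q r (Hyx q Hq) Hr Eq); exact Hq.
Qed.

Lemma config_image_restrict (x y : E -> Prop) :
  subset y x -> config X (image h x) ->
  (forall r e, x r -> y e -> leq X (h r) (h e) -> y r) ->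
  config X (image h y).
Proof.
  intros Hyx Hx Hclosed.
  pose proof (subset_image (h := h) Hyx) as Himg.
  pose proof Hx as (Hfin & Hcon & _).
  split; [exact (finite_subset Hfin Himg) | split; [exact (con_sub X Himg Hcon) |]].
  intros c _ (e & He & <-) Hle.
  destruct (config_image_lift Hx (Hyx e He) Hle) as (r & Hr & <-).
  exists r; split; [exact (Hclosed r e Hr He Hle) | reflexivity].
Qed.

Lemma imm_of_no_between (x : E -> Prop) (R : E -> E -> Prop) (e e' : E) :
  config X (image h x) -> inj_on h x ->
  (forall r q, x r -> leq X (h r) (h q) -> R r q) ->
  x e -> x e' -> e <> e' -> leq X (h e) (h e') ->
  (forall r, x r -> R e r -> R r e' -> r = e \/ r = e') ->
  imm X (h e) (h e').
Proof.
  intros Hx Hinj HR He He' Hne Hle Hnone.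
  split; [split; [exact Hle | intro E'; exact (Hne (Hinj e e' He He' E'))] |].
  intros (c & [Hec Hne1] & [Hce' Hne2]).
  destruct (config_image_lift Hx He' Hce') as (r & Hr & <-).
  destruct (Hnone r Hr (HR e r He Hec) (HR r e' Hr Hce')) as [-> | ->];
    contradiction.
Qed.

End ConfigImage.

Section PullbackOrder.
Variables (A B C : event_structure) (f : es_map A C) (g : es_map B C).

Local Notation event := (ev A * ev B)%type.
Local Notation pb_config := (pb_config f g).
Local Notation prime := (prime f g).

(* [pb_le x e e'] is e <=_x e'; [prime x e'] unfolds to
   [fun e => x e /\ pb_le x e e']. *)
Definition pb_le (x : event -> Prop) (e e' : event) : Prop :=
  forall y, pb_config y -> subset y x -> y e' -> y e.

Definition pb_step (e e' : event) : Prop :=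
  leq A (fst e) (fst e') \/ leq B (snd e) (snd e').

Lemma pb_config_inj_fst x : pb_config x -> inj_on fst x.
Proof. intros (_ & _ & _ & _ & Hinj & _) e e' He He' E; apply Hinj; auto. Qed.

Lemma pb_config_inj_snd x : pb_config x -> inj_on snd x.
Proof. intros (_ & _ & _ & _ & Hinj & _) e e' He He' E; apply Hinj; auto. Qed.

Lemma pb_config_fst x : pb_config x -> config A (pi1 A B x).
Proof. intros (_ & _ & HA & _); exact HA. Qed.

Lemma pb_config_snd x : pb_config x -> config B (pi2 A B x).
Proof. intros (_ & _ & _ & HB & _); exact HB. Qed.

(* Separating sub-configurations of [x] can be intersected with [y], whose
   projections stay configurations because the projections are injective on [x]. *)
Lemma pb_config_sub x y :
  pb_config x -> subset y x -> config A (pi1 A B y) -> config B (pi2 A B y) ->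
  pb_config y.
Proof.
  intros Hx Hyx HAy HBy.
  pose proof (pb_config_inj_fst Hx) as Hfst.
  pose proof (pb_config_inj_snd Hx) as Hsnd.
  destruct Hx as (Hfin & Hfg & _ & _ & Hinj & Hsep).
  split; [exact (finite_subset Hfin Hyx) |].
  split; [intros e He; exact (Hfg e (Hyx e He)) |].
  split; [exact HAy | split; [exact HBy | split]].
  - intros e e' He He'; apply Hinj; auto.
  - intros e e' He He' Hne.
    destruct (Hsep e e' (Hyx e He) (Hyx e' He') Hne) as (y0 & Hy0x & HA0 & HB0 & Hiff).
    exists (fun q => y0 q /\ y q).
    assert (Hmeet : subset (fun q => y0 q /\ y q) y) by (intros q [_ Hq]; exact Hq).
    split; [exact Hmeet | split; [| split]].
    + apply (config_image_restrict Hmeet HAy).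
      intros r q Hr [Hq0 _] Hle; split; [| exact Hr].
      exact (config_image_down Hfst Hy0x HA0 (Hyx r Hr) Hq0 Hle).
    + apply (config_image_restrict Hmeet HBy).
      intros r q Hr [Hq0 _] Hle; split; [| exact Hr].
      exact (config_image_down Hsnd Hy0x HB0 (Hyx r Hr) Hq0 Hle).
    + tauto.
Qed.

Lemma pb_le_refl x e : pb_le x e e.
Proof. intros y _ _ He; exact He. Qed.

Lemma pb_le_trans x e1 e2 e3 : pb_le x e1 e2 -> pb_le x e2 e3 -> pb_le x e1 e3.
Proof. intros H12 H23 y Hy Hyx He3; exact (H12 y Hy Hyx (H23 y Hy Hyx He3)). Qed.

Lemma pb_le_antisym x e e' :
  pb_config x -> x e -> x e' -> pb_le x e e' -> pb_le x e' e -> e = e'.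
Proof.
  intros Hx He He' H1 H2; apply NNPP; intro Hne.
  pose proof Hx as (_ & _ & _ & _ & _ & Hsep).
  destruct (Hsep e e' He He' Hne) as (y & Hyx & HAy & HBy & Hiff).
  pose proof (pb_config_sub Hx Hyx HAy HBy) as Hy.
  specialize (H1 y Hy Hyx); specialize (H2 y Hy Hyx); tauto.
Qed.

Lemma pb_le_of_step x e e' :
  pb_config x -> x e -> pb_step e e' -> pb_le x e e'.
Proof.
  intros Hx He [Hle | Hle] y Hy Hyx He'.
  - exact (config_image_down (pb_config_inj_fst Hx) Hyx (pb_config_fst Hy) He He' Hle).
  - exact (config_image_down (pb_config_inj_snd Hx) Hyx (pb_config_snd Hy) He He' Hle).
Qed.

Lemma prime_subset_pb_le x e e' :
  x e -> subset (prime x e) (prime x e') <-> pb_le x e e'.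
Proof.
  intro He; split.
  - intro Hsub; exact (proj2 (Hsub e (conj He (@pb_le_refl x e)))).
  - intros Hle q [Hq Hqe]; exact (conj Hq (pb_le_trans Hqe Hle)).
Qed.

Lemma pb_imm_no_between x e e' q :
  pb_config x -> x e -> x e' -> x q ->
  pb_imm f g (prime x e) (prime x e') ->
  pb_le x e q -> pb_le x q e' -> q = e \/ q = e'.
Proof.
  intros Hx He He' Hq [_ Hnone] Heq Hqe'.
  apply NNPP; intro Hne; apply Hnone; exists (prime x q).
  split; [exists x, q; split; [exact Hx | split; [exact Hq | intro; tauto]] |].
  split; split.
  - exact (proj2 (prime_subset_pb_le q He) Heq).
  - intro Hsub; apply Hne; left.
    exact (pb_le_antisym Hx Hq He (proj1 (prime_subset_pb_le e Hq) Hsub) Heq).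
  - exact (proj2 (prime_subset_pb_le e' Hq) Hqe').
  - intro Hsub; apply Hne; right.
    exact (pb_le_antisym Hx Hq He' Hqe' (proj1 (prime_subset_pb_le q He') Hsub)).
Qed.

(* [e'] and the events [pb_le x]-below some [q <> e'] with [pb_step q e']
   form a sub-configuration of [x], which must contain [e]. *)
Lemma pb_le_decompose x e e' :
  pb_config x -> x e' -> pb_le x e e' -> e <> e' ->
  exists q, x q /\ q <> e' /\ pb_step q e' /\ pb_le x e q.
Proof.
  intros Hx He' Hle Hne.
  set (D := fun r => x r /\ (r = e' \/
              exists q, x q /\ q <> e' /\ pb_step q e' /\ pb_le x r q)).
  assert (HDx : subset D x) by (intros r [Hr _]; exact Hr).
  assert (Hclosed : forall r p, x r -> D p -> pb_step r p -> D r).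
  { intros r p Hr [Hp [-> | (q & Hq & Hqe' & Hstep & Hpq)]] Hrp;
      split; [exact Hr | | exact Hr |];
      (destruct (classic (r = e')) as [Hre' | Hre']; [left; exact Hre' | right]).
    - exists r; repeat split; auto using pb_le_refl.
    - exists q; repeat split; auto.
      exact (pb_le_trans (pb_le_of_step Hx Hr Hrp) Hpq). }
  assert (HD : pb_config D).
  { apply (pb_config_sub Hx HDx).
    - apply (config_image_restrict HDx (pb_config_fst Hx)).
      intros r p Hr Hp Hrp; exact (Hclosed r p Hr Hp (or_introl Hrp)).
    - apply (config_image_restrict HDx (pb_config_snd Hx)).
      intros r p Hr Hp Hrp; exact (Hclosed r p Hr Hp (or_intror Hrp)). }
  destruct (Hle D HD HDx (conj He' (or_introl eq_refl))) as [_ [Hee' | Hq]];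
    [contradiction | exact Hq].
Qed.

End PullbackOrder.


Theorem mainTheorem4 (A B C : event_structure) (f : es_map A C) (g : es_map B C)
  (x : ev A * ev B -> Prop) (a a' : ev A) (b b' : ev B) :
  pb_config f g x -> x (a, b) -> x (a', b') ->
  pb_imm f g (prime f g x (a, b)) (prime f g x (a', b')) ->
  imm A a a' \/ imm B b b'.
Proof.
  intros Hx Hab Hab' Himm.
  pose proof Himm as [[Hsub Hnsub] _].
  assert (Hne : (a, b) <> (a', b')).
  { intro E; rewrite E in Hnsub; apply Hnsub; intros e He; exact He. }
  pose proof (proj1 (prime_subset_pb_le f g (a', b') Hab) Hsub) as Hle.
  pose proof (fun r (Hr : x r) => pb_imm_no_between Hx Hab Hab' Hr Himm) as Hnone.
  destruct (pb_le_decompose Hx Hab' Hle Hne) as (q & Hq & Hqe' & Hstep & Hleq).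
  destruct (Hnone q Hq Hleq (pb_le_of_step Hx Hq Hstep)) as [-> | ->];
    [| contradiction].
  destruct Hstep as [HA | HB]; [left | right].
  - exact (imm_of_no_between (pb_config_fst Hx) (pb_config_inj_fst Hx)
             (fun r q Hr Hle => pb_le_of_step Hx Hr (or_introl Hle))
             Hab Hab' Hne HA Hnone).
  - exact (imm_of_no_between (pb_config_snd Hx) (pb_config_inj_snd Hx)
             (fun r q Hr Hle => pb_le_of_step Hx Hr (or_intror Hle))
             Hab Hab' Hne HB Hnone).
Qed.
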